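(* Let $n\ge1$ be an integer and let $k\in\mathbb{R}\setminus B_n$. Then there is a unique pair $(a,b)\in\mathbb{R}^2$ with $(a,b)\neq(0,0)$ satisfying both $S^{(a,b)}_{k,n+1}-S^{(a,b)}_{k,n}=bk-2b+a$ and $4a^3+27b^2=0$; namely $a=-\frac{27(F_n(k)-1)^2}{4(G_n(k)-k+2)^2}$, $b=\frac{27(F_n(k)-1)^3}{4(G_n(k)-k+2)^3}$.
   Context: For real $k,a,b$, the generalized $k$-FL sequence is $S^{(a,b)}_{k,0}=2b$, $S^{(a,b)}_{k,1}=bk+a$, $S^{(a,b)}_{k,m}=kS^{(a,b)}_{k,m-1}+S^{(a,b)}_{k,m-2}$ ($m\ge2$). Define $f_m,g_m\in\mathbb{Z}[T]$ by $f_0=0,f_1=1,g_0=2,g_1=T$, $f_m=Tf_{m-1}+f_{m-2}$, $g_m=Tg_{m-1}+g_{m-2}$, and set $F_n=f_{n+1}-f_n$, $G_n=g_{n+1}-g_n$, so that $S^{(a,b)}_{k,n+1}-S^{(a,b)}_{k,n}=F_n(k)a+G_n(k)b$. Let $B_n=\{k\in\mathbb{R}: F_n(k)-1=0 \text{ or } G_n(k)-k+2=0\}$. *)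

From HB Require Import structures.
From mathcomp Require Import all_boot all_order all_algebra.
From mathcomp Require Import reals.
Set Implicit Arguments. Unset Strict Implicit. Unset Printing Implicit Defensive.
Import Order.TTheory GRing.Theory Num.Theory.
Local Open Scope ring_scope.

Fixpoint fpoly (m : nat) : {poly int} :=
  match m with
  | 0%N => 0
  | 1%N => 1
  | (m'.+1 as m1).+1 => 'X * fpoly m1 + fpoly m'
  end.

Fixpoint gpoly (m : nat) : {poly int} :=
  match m with
  | 0%N => 2%:P
  | 1%N => 'X
  | (m'.+1 as m1).+1 => 'X * gpoly m1 + gpoly m'
  end.

Definition Fpoly (n : nat) : {poly int} := fpoly n.+1 - fpoly n.
Definition Gpoly (n : nat) : {poly int} := gpoly n.+1 - gpoly n.

Definition evalZ (R : realType) (p : {poly int}) (k : R) : R :=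
  (map_poly (fun z : int => z%:~R) p).[k].

Fixpoint Sseq (R : realType) (k a b : R) (m : nat) : R :=
  match m with
  | 0%N => 2 * b
  | 1%N => b * k + a
  | (m'.+1 as m1).+1 => k * Sseq k a b m1 + Sseq k a b m'
  end.

Definition Bset (R : realType) (n : nat) (k : R) : Prop :=
  evalZ (Fpoly n) k - 1 = 0 \/ evalZ (Gpoly n) k - k + 2 = 0.

(* The difference S_{n+1} - S_n is linear in (a, b), with coefficients F_n(k) and G_n(k), so the
   first condition is the line x a + y b = 0 with x = F_n(k) - 1, y = G_n(k) - k + 2.  Through the
   parametrisation (a, b) = (-3 t^2, 2 t^3) of the cuspidal cubic 4 a^3 + 27 b^2 = 0, such a line
   meets the cubic outside the origin only at t = 3x / (2y), which is nonzero when x is. *)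
From HB Require Import structures.
From mathcomp Require Import all_boot all_order all_algebra.
From mathcomp Require Import reals.
From mathcomp Require Import ring.
Set Implicit Arguments.
Unset Strict Implicit.
Unset Printing Implicit Defensive.
Import Order.TTheory GRing.Theory Num.Theory.
Local Open Scope ring_scope.

Section CuspidalCubic.

Variables (R : numFieldType) (x y : R).
Hypothesis y_neq0 : y != 0.

Definition cusp_meet : R * R :=
  (- (27 * x ^+ 2) / (4 * y ^+ 2), (27 * x ^+ 3) / (4 * y ^+ 3)).

Lemma cusp_meet_line : x * cusp_meet.1 + y * cusp_meet.2 = 0.
Proof. by rewrite /=; field; rewrite y_neq0. Qed.

Lemma cusp_meet_cubic : 4 * cusp_meet.1 ^+ 3 + 27 * cusp_meet.2 ^+ 2 = 0.
Proof. by rewrite /=; field; rewrite y_neq0. Qed.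

Lemma cusp_meet_neq0 : x != 0 -> cusp_meet != (0, 0).
Proof.
move=> x_neq0; apply: contraNneq x_neq0 => -[a0 _].
have : x ^+ 2 = - cusp_meet.1 * (4 * y ^+ 2) / 27 by rewrite /=; field; rewrite y_neq0.
by rewrite /= a0 oppr0 !mul0r => /eqP; rewrite sqrf_eq0.
Qed.

Lemma line_cubic_meet (a b : R) :
  (a, b) != (0, 0) -> x * a + y * b = 0 -> 4 * a ^+ 3 + 27 * b ^+ 2 = 0 ->
  (a, b) = cusp_meet.
Proof.
move=> ab_neq0 on_line on_cubic.
have b_eq : b = - (x * a) / y.
  by apply: (mulIf y_neq0); rewrite mulfVK // -(addr0 (- _)) -on_line; ring.
have a_neq0 : a != 0.
  by apply: contraNneq ab_neq0 => a0; rewrite b_eq a0 mulr0 oppr0 mul0r.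
have : a ^+ 2 * (4 * a * y ^+ 2 + 27 * x ^+ 2) = 0.
  by rewrite -(mul0r (y ^+ 2)) -on_cubic b_eq; field; rewrite y_neq0.
move/eqP; rewrite mulf_eq0 expf_eq0 (negbTE a_neq0) /= addr_eq0 => /eqP a_eq.
have {}a_eq : a = - (27 * x ^+ 2) / (4 * y ^+ 2).
  by rewrite -a_eq; field; rewrite y_neq0.
by rewrite b_eq a_eq /cusp_meet; congr pair; field; rewrite y_neq0.
Qed.

End CuspidalCubic.

Section FLSequence.

Variables (R : realType) (k a b : R).

Lemma evalZ_sub (p q : {poly int}) : evalZ (p - q) k = evalZ p k - evalZ q k.
Proof. by rewrite /evalZ rmorphB /= hornerD hornerN. Qed.

Lemma evalZ_XmulD (p q : {poly int}) :
  evalZ ('X * p + q) k = k * evalZ p k + evalZ q k.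
Proof. by rewrite /evalZ rmorphD rmorphM /= map_polyX hornerD hornerM hornerX. Qed.

Lemma Sseq_fpoly_gpoly m :
  Sseq k a b m = evalZ (fpoly m) k * a + evalZ (gpoly m) k * b.
Proof.
suff : Sseq k a b m = evalZ (fpoly m) k * a + evalZ (gpoly m) k * b /\
       Sseq k a b m.+1 = evalZ (fpoly m.+1) k * a + evalZ (gpoly m.+1) k * b by case.
elim: m => [|m [IHm IHm1]]; split=> //.
- by rewrite /= /evalZ map_poly0 map_polyC /= hornerC horner0; ring.
- by rewrite /= /evalZ map_polyC map_polyX hornerX hornerC /=; ring.
- rewrite (_ : Sseq k a b m.+2 = k * Sseq k a b m.+1 + Sseq k a b m) //.
  by rewrite IHm IHm1 !evalZ_XmulD; ring.
Qed.

Lemma Sseq_diff_eqP n :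
  Sseq k a b n.+1 - Sseq k a b n = b * k - 2 * b + a <->
  (evalZ (Fpoly n) k - 1) * a + (evalZ (Gpoly n) k - k + 2) * b = 0.
Proof.
have -> : Sseq k a b n.+1 - Sseq k a b n =
          (evalZ (Fpoly n) k - 1) * a + (evalZ (Gpoly n) k - k + 2) * b +
          (b * k - 2 * b + a).
  by rewrite !Sseq_fpoly_gpoly /Fpoly /Gpoly !evalZ_sub; ring.
by split=> [/eqP|->]; [rewrite -subr_eq0 addrK => /eqP|rewrite add0r].
Qed.

End FLSequence.

Theorem lemma3p6 (R : realType) (n : nat) (k : R) :
  (1 <= n)%N -> ~ Bset n k ->
  let P := fun (a b : R) =>
    (a, b) <> (0, 0) /\
    Sseq k a b n.+1 - Sseq k a b n = b * k - 2 * b + a /\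
    4 * a ^+ 3 + 27 * b ^+ 2 = 0 in
  let x := evalZ (Fpoly n) k - 1 in
  let y := evalZ (Gpoly n) k - k + 2 in
  (exists! ab : R * R, P ab.1 ab.2) /\
  P (- (27 * x ^+ 2) / (4 * y ^+ 2)) ((27 * x ^+ 3) / (4 * y ^+ 3)).
Proof.
move=> _ notB P x y.
have [x_neq0 y_neq0] : x != 0 /\ y != 0.
  by split; apply/eqP => h; apply: notB; [left|right].
have P_cusp : P (cusp_meet x y).1 (cusp_meet x y).2.
  split; first exact/eqP/(cusp_meet_neq0 y_neq0).
  by split; [apply/Sseq_diff_eqP/cusp_meet_line|apply: cusp_meet_cubic].
split=> //; exists (cusp_meet x y); split=> // -[a b] /= [/eqP ab_neq0 [/Sseq_diff_eqP on_line on_cubic]].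
exact/esym/(line_cubic_meet y_neq0 ab_neq0 on_line on_cubic).
Qed.
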